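(* For every $c>0$ there exists $c'>0$ such that for all $\phi\in X_G$ with $|\phi(t)|\le c$ for all $t\in[-r,0]$ and for all $t\in[-r,t_\phi)$ we have $|x^\phi(t)|\le c'$.
   Context: Constants $\beta,\mu,\gamma,a>0$. The function $g:\mathbb{R}\to(0,\infty)$ is continuously differentiable with $0<g_0:=\inf g(\mathbb{R})\le \sup g(\mathbb{R})=g_U<\infty$. The function $v:\mathbb{R}\to\mathbb{R}$ is continuously differentiable with $0<v_0\le v(x)\le v_U$ for all $x$. Fix $r>a/v_0$; $C=C([-r,0],\mathbb{R})$, $C^1=C^1([-r,0],\mathbb{R})$ with norm $|\phi|_1=\max|\phi|+\max|\phi'|$. For a function $x$ defined on an interval containing $[t-r,t]$, the segment $x_t\in C$ is $x_t(s)=x(t+s)$. For $\phi\in C$ let $\delta(\phi)$ be the unique $u\in(0,r)$ with $a=\int_{-u}^0 v(\phi(s))\,ds$. Define $G:C^1\to\mathbb{R}$ by $$G(\phi)=\beta e^{-\mu\delta(\phi)}\frac{v(\phi(0))}{v(\phi(-\delta(\phi)))}g(\phi(-\delta(\phi)))-\gamma\phi(0),$$ and $X_G=\{\phi\in C^1:\phi'(0)=G(\phi)\}$. Each $\phi\in X_G$ determines a unique maximal continuously differentiable solution $x^\phi:[-r,t_\phi)\to\mathbb{R}$, $0<t_\phi\le\infty$, of $x'(t)=G(x_t)$ for $0<t<t_\phi$, $x_0=\phi$ (every other such solution with $x_0=\phi$ is a restriction of $x^\phi$). *)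

From Stdlib Require Import Reals Lra ClassicalEpsilon.
From Coquelicot Require Import Coquelicot.
Open Scope R_scope.

Definition deriv_within (D : R -> Prop) (f : R -> R) (t l : R) : Prop :=
  forall eps : R, 0 < eps -> exists delta : R, 0 < delta /\
    forall h : R, D (t + h) -> h <> 0 -> Rabs h < delta ->
      Rabs ((f (t + h) - f t) / h - l) <= eps.

Definition cont_within (D : R -> Prop) (f : R -> R) (t : R) : Prop :=
  forall eps : R, 0 < eps -> exists delta : R, 0 < delta /\
    forall s : R, D s -> Rabs (s - t) < delta -> Rabs (f s - f t) <= eps.

Definition C1_on (D : R -> Prop) (f : R -> R) : Prop :=
  exists f' : R -> R,
    (forall t, D t -> deriv_within D f t (f' t)) /\
    (forall t, D t -> cont_within D f' t).

Definition Iseg (r : R) : R -> Prop := fun s => -r <= s <= 0.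

Definition seg (x : R -> R) (t : R) : R -> R := fun s => x (t + s).

Definition delay (a r : R) (v : R -> R) (phi : R -> R) : R :=
  epsilon (inhabits 0)
    (fun u => 0 < u < r /\ a = RInt (fun s => v (phi s)) (- u) 0).

Definition Gfun (beta mu gamma a r : R) (g v : R -> R) (phi : R -> R) : R :=
  let d := delay a r v phi in
  beta * exp (- mu * d) * (v (phi 0) / v (phi (- d))) * g (phi (- d))
  - gamma * phi 0.

Definition in_XG (beta mu gamma a r : R) (g v : R -> R) (phi : R -> R) : Prop :=
  C1_on (Iseg r) phi /\
  deriv_within (Iseg r) phi 0 (Gfun beta mu gamma a r g v phi).

Definition is_solution (beta mu gamma a r : R) (g v : R -> R)
    (phi : R -> R) (x : R -> R) (T : Rbar) : Prop :=
  Rbar_lt 0 T /\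
  C1_on (fun t => -r <= t /\ Rbar_lt t T) x /\
  (forall s, Iseg r s -> x s = phi s) /\
  (forall t, 0 < t -> Rbar_lt t T ->
     deriv_within (fun t => -r <= t /\ Rbar_lt t T) x t
       (Gfun beta mu gamma a r g v (seg x t))).

Definition is_max_solution (beta mu gamma a r : R) (g v : R -> R)
    (phi : R -> R) (x : R -> R) (T : Rbar) : Prop :=
  is_solution beta mu gamma a r g v phi x T /\
  forall (y : R -> R) (T' : Rbar), is_solution beta mu gamma a r g v phi y T' ->
    Rbar_le T' T /\ (forall t, -r <= t -> Rbar_lt t T' -> y t = x t).

(* The delayed term of G is positive and at most K := beta (vU / v0) gU: the
   condition a / v0 < r makes the delay exist in (0, r), so the exponential factor
   is at most 1, and v and g are bounded.  Along a solution x' + gamma x therefore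
   lies in [0, K].  Where x attains its maximum over [0, t] the left derivative is
   nonnegative, forcing gamma x <= K there; at a minimum it is nonpositive, forcing
   x >= 0.  Hence |x| <= max(c, K / gamma). *)

From Stdlib Require Import Reals Lra ClassicalEpsilon.
From Coquelicot Require Import Coquelicot.
Open Scope R_scope.

Lemma lipschitz_continuity (f : R -> R) (L : R) :
  (forall x y, Rabs (f x - f y) <= L * Rabs (x - y)) -> continuity f.
Proof.
  intros Hf t eps Heps.
  assert (HL : 0 < Rabs L + 1) by (pose proof (Rabs_pos L); lra).
  exists (eps / (Rabs L + 1)); split; [apply Rdiv_lt_0_compat; lra |].
  intros s [_ Hs]; simpl in *; unfold R_dist in *.
  apply Rle_lt_trans with (Rabs L * Rabs (s - t)).
  - eapply Rle_trans; [apply Hf | apply Rmult_le_compat_r; [apply Rabs_pos | apply RRle_abs]].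
  - apply Rle_lt_trans with ((Rabs L + 1) * Rabs (s - t)).
    + pose proof (Rabs_pos (s - t)); nra.
    + apply Rmult_lt_compat_l with (r := Rabs L + 1) in Hs; [| lra].
      now replace ((Rabs L + 1) * (eps / (Rabs L + 1))) with eps in Hs by (field; lra).
Qed.

Definition clamp (lo hi u : R) : R := Rmax lo (Rmin hi u).

Lemma clamp_id lo hi u : lo <= u <= hi -> clamp lo hi u = u.
Proof. intros; unfold clamp, Rmax, Rmin; repeat destruct Rle_dec; lra. Qed.

Lemma clamp_bounds lo hi u : lo <= hi -> lo <= clamp lo hi u <= hi.
Proof. intros; unfold clamp, Rmax, Rmin; repeat destruct Rle_dec; lra. Qed.

Lemma clamp_lipschitz lo hi x y : Rabs (clamp lo hi x - clamp lo hi y) <= Rabs (x - y).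
Proof.
  unfold clamp, Rmax, Rmin; repeat destruct Rle_dec;
    unfold Rabs; repeat destruct Rcase_abs; lra.
Qed.

Section IntegralOfLength.

Variables (w : R -> R) (r m M : R).
Hypothesis w_cont : forall s, -r <= s <= 0 -> continuous w s.
Hypothesis w_bounds : forall s, -r <= s <= 0 -> m <= w s <= M.
Hypothesis m_pos : 0 < m.

Lemma ex_RInt_left_segment p q : -r <= p <= 0 -> -r <= q <= 0 -> ex_RInt w p q.
Proof.
  intros Hp Hq; apply (@ex_RInt_continuous R_CompleteNormedModule); intros z Hz.
  apply w_cont; unfold Rmin, Rmax in Hz; destruct Rle_dec; lra.
Qed.

Lemma RInt_left_segment_lipschitz p q : -r <= p <= 0 -> -r <= q <= 0 ->
  Rabs (RInt w p q) <= M * Rabs (q - p).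
Proof.
  intros Hp Hq; rewrite Rmult_comm.
  apply (norm_RInt_le_const_abs w p q); [| apply (RInt_correct w), ex_RInt_left_segment; auto].
  intros z Hz; change (Rabs (w z) <= M).
  assert (Hz' : -r <= z <= 0) by (unfold Rmin, Rmax in Hz; destruct Rle_dec; lra).
  destruct (w_bounds z Hz'); rewrite Rabs_right; lra.
Qed.

(* w is only controlled on [-r, 0]; clamping the length makes u |-> RInt w (-u) 0
   continuous on all of R, as [IVT] requires. *)
Lemma RInt_length_eq (a : R) : 0 < a -> a < r * m ->
  exists u, 0 < u < r /\ RInt w (- u) 0 = a.
Proof.
  intros ha har.
  assert (hr : 0 < r) by (destruct (Rle_lt_dec r 0); [pose proof (Rmult_le_compat_r m r 0 ltac:(lra)); lra | auto]).
  set (U := fun u => RInt w (- clamp 0 r u) 0).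
  assert (HU : continuity U).
  { apply lipschitz_continuity with M; intros x y; unfold U.
    pose proof (clamp_bounds 0 r x ltac:(lra)); pose proof (clamp_bounds 0 r y ltac:(lra)).
    pose proof (clamp_lipschitz 0 r x y).
    set (cx := clamp 0 r x) in *; set (cy := clamp 0 r y) in *.
    assert (Hch := @RInt_Chasles R_CompleteNormedModule w (- cx) (- cy) 0
      (ex_RInt_left_segment (- cx) (- cy) ltac:(lra) ltac:(lra))
      (ex_RInt_left_segment (- cy) 0 ltac:(lra) ltac:(lra))).
    change (RInt w (- cx) (- cy) + RInt w (- cy) 0 = RInt w (- cx) 0) in Hch.
    replace (RInt w (- cx) 0 - RInt w (- cy) 0) with (RInt w (- cx) (- cy)) by lra.
    eapply Rle_trans; [apply RInt_left_segment_lipschitz; lra |].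
    apply Rmult_le_compat_l; [destruct (w_bounds 0); lra |].
    now replace (- cy - - cx) with (cx - cy) by ring. }
  assert (HU0 : U 0 = 0).
  { unfold U; rewrite clamp_id, Ropp_0 by lra; exact (@RInt_point R_CompleteNormedModule 0 w). }
  assert (HUr : r * m <= U r).
  { unfold U; rewrite clamp_id by lra.
    assert (Hle := RInt_le (fun _ => m) w (- r) 0 ltac:(lra) (ex_RInt_const _ _ _)
      (ex_RInt_left_segment (- r) 0 ltac:(lra) ltac:(lra))
      (fun z Hz => proj1 (w_bounds z ltac:(lra)))).
    rewrite RInt_const in Hle; change ((0 - - r) * m <= RInt w (- r) 0) in Hle; lra. }
  destruct (IVT (fun u => U u - a) 0 r) as [u [Hu HUu]]; try lra.
  { apply continuity_minus; [exact HU | now apply continuity_const]. }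
  exists u; unfold U in HUu; rewrite clamp_id in HUu by lra.
  assert (u <> 0) by (intros ->; unfold U in HU0; rewrite clamp_id in HU0; lra).
  assert (u <> r) by (intros ->; unfold U in HUr; rewrite clamp_id in HUr; lra).
  split; lra.
Qed.

End IntegralOfLength.

Lemma deriv_within_derivable_pt_lim (D : R -> Prop) f t l e :
  0 < e -> (forall s, Rabs (s - t) < e -> D s) ->
  deriv_within D f t l -> derivable_pt_lim f t l.
Proof.
  intros he HD Hd eps Heps.
  destruct (Hd (eps / 2) ltac:(lra)) as [d [hd Hq]].
  exists (mkposreal _ (Rmin_pos d e hd he)); simpl; intros h Hh0 Hh.
  apply Rle_lt_trans with (eps / 2); [| lra].
  apply Hq; [| exact Hh0 | eapply Rlt_le_trans; [exact Hh | apply Rmin_l]].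
  apply HD; replace (t + h - t) with h by ring.
  eapply Rlt_le_trans; [exact Hh | apply Rmin_r].
Qed.

Lemma deriv_within_opp (D : R -> Prop) f t l :
  deriv_within D f t l -> deriv_within D (fun s => - f s) t (- l).
Proof.
  intros Hd eps Heps; destruct (Hd eps Heps) as [d [hd Hq]].
  exists d; split; [exact hd |]; intros h HD Hh0 Hh.
  replace ((- f (t + h) - - f t) / h - - l) with (- ((f (t + h) - f t) / h - l))
    by (field; exact Hh0).
  rewrite Rabs_Ropp; auto.
Qed.

Lemma deriv_within_left_max (D : R -> Prop) f p l k :
  0 < k -> deriv_within D f p l ->
  (forall h, -k < h < 0 -> D (p + h) /\ f (p + h) <= f p) -> 0 <= l.
Proof.
  intros hk Hd Hmax; destruct (Rle_lt_dec 0 l) as [| Hl]; [assumption | exfalso].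
  destruct (Hd (- l / 2) ltac:(lra)) as [d [hd Hq]].
  set (h := - Rmin (d / 2) (k / 2)).
  pose proof (Rmin_pos (d / 2) (k / 2) ltac:(lra) ltac:(lra)).
  pose proof (Rmin_l (d / 2) (k / 2)); pose proof (Rmin_r (d / 2) (k / 2)).
  destruct (Hmax h ltac:(unfold h; lra)) as [HD Hf].
  specialize (Hq h HD ltac:(unfold h; lra)
    ltac:(rewrite Rabs_left by (unfold h; lra); unfold h; lra)).
  assert (0 <= (f (p + h) - f p) / h).
  { replace ((f (p + h) - f p) / h) with ((f p - f (p + h)) / - h)
      by (field; unfold h; lra).
    apply Rdiv_le_0_compat; unfold h in *; lra. }
  apply Rabs_le_between in Hq; lra.
Qed.

Section LinearFeedback.

Variables (D : R -> Prop) (gamma t : R).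
Hypothesis gamma_pos : 0 < gamma.
Hypothesis t_nonneg : 0 <= t.
Hypothesis D_interval : forall s, 0 <= s <= t -> D s.

Lemma le_Rmax_of_feedback (x F : R -> R) (K : R) :
  (forall s, 0 <= s <= t -> continuity_pt x s) ->
  (forall p, 0 < p <= t -> deriv_within D x p (F p) /\ F p + gamma * x p <= K) ->
  x t <= Rmax (x 0) (K / gamma).
Proof.
  intros Hcont Hode.
  destruct (Rle_lt_dec (x t) (Rmax (x 0) (K / gamma))) as [| Hgt]; [assumption | exfalso].
  pose proof (Rmax_l (x 0) (K / gamma)); pose proof (Rmax_r (x 0) (K / gamma)).
  destruct (continuity_ab_maj x 0 t t_nonneg Hcont) as [p [Hmax Hp]].
  pose proof (Hmax t ltac:(lra)).
  assert (hp : 0 < p) by (destruct (Req_dec p 0) as [-> |]; lra).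
  destruct (Hode p ltac:(lra)) as [Hd HK].
  assert (0 <= F p).
  { apply (deriv_within_left_max D x p (F p) p hp Hd).
    intros h Hh; split; [apply D_interval | apply Hmax]; lra. }
  assert (x p <= K / gamma); [| lra].
  apply (Rmult_le_reg_l gamma); [exact gamma_pos |].
  replace (gamma * (K / gamma)) with K by (field; lra); lra.
Qed.

Lemma Rabs_le_Rmax_of_feedback (x F : R -> R) (K : R) :
  (forall s, 0 <= s <= t -> continuity_pt x s) ->
  (forall p, 0 < p <= t -> deriv_within D x p (F p) /\ 0 <= F p + gamma * x p <= K) ->
  Rabs (x t) <= Rmax (Rabs (x 0)) (K / gamma).
Proof.
  intros Hcont Hode.
  assert (Hup : x t <= Rmax (x 0) (K / gamma)).
  { apply (le_Rmax_of_feedback x F); [exact Hcont |].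
    intros p Hp; destruct (Hode p Hp) as [Hd HF]; split; [exact Hd | lra]. }
  assert (Hlow : - x t <= Rmax (- x 0) (0 / gamma)).
  { apply (le_Rmax_of_feedback (fun s => - x s) (fun s => - F s)).
    - intros s Hs; apply continuity_pt_opp, Hcont, Hs.
    - intros p Hp; destruct (Hode p Hp) as [Hd HF].
      split; [apply deriv_within_opp, Hd | lra]. }
  rewrite Rdiv_0_l in Hlow.
  unfold Rmax in *; unfold Rabs; repeat destruct Rle_dec; repeat destruct Rcase_abs; lra.
Qed.

End LinearFeedback.

Lemma delay_bounds (a r : R) (v : R -> R) (v0 vU : R) (phi : R -> R) :
  0 < a -> 0 < v0 -> (forall x, v0 <= v x <= vU) -> a / v0 < r ->
  (forall x, continuous v x) -> (forall s, -r <= s <= 0 -> continuous phi s) ->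
  0 < delay a r v phi < r.
Proof.
  intros ha hv0 hv hr hvc hphi.
  destruct (RInt_length_eq (fun s => v (phi s)) r v0 vU) with (a := a)
    as [u [Hu Hint]]; auto.
  - intros s Hs; apply continuous_comp; auto.
  - apply Rlt_div_l; lra.
  - unfold delay.
    apply (epsilon_spec (inhabits 0)
      (fun u => 0 < u < r /\ a = RInt (fun s => v (phi s)) (- u) 0)).
    exists u; auto.
Qed.

Lemma Gfun_add_decay_bounds (beta mu gamma a r : R) (g v : R -> R)
    (g0 gU v0 vU : R) (phi : R -> R) :
  0 < beta -> 0 <= mu -> 0 < a ->
  0 < g0 -> (forall x, g0 <= g x <= gU) ->
  0 < v0 -> (forall x, v0 <= v x <= vU) -> a / v0 < r ->
  (forall x, continuous v x) -> (forall s, -r <= s <= 0 -> continuous phi s) ->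
  0 <= Gfun beta mu gamma a r g v phi + gamma * phi 0 <= beta * (vU / v0) * gU.
Proof.
  intros hbeta hmu ha hg0 hg hv0 hv hr hvc hphi.
  pose proof (delay_bounds a r v v0 vU phi ha hv0 hv hr hvc hphi) as Hd.
  unfold Gfun; set (d := delay a r v phi) in *.
  set (E := exp (- mu * d)); set (B := v (phi 0) / v (phi (- d))); set (Gd := g (phi (- d))).
  assert (hE : 0 < E <= 1).
  { unfold E; split; [apply exp_pos | rewrite <- exp_0].
    destruct (Rle_lt_or_eq_dec 0 (mu * d)) as [Hpos | Hzero]; [nra | |].
    - left; apply exp_increasing; lra.
    - right; f_equal; lra. }
  assert (hB : 0 < B <= vU / v0).
  { destruct (hv (phi 0)), (hv (phi (- d))); unfold B; split.
    - apply Rdiv_lt_0_compat; lra.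
    - unfold Rdiv; apply Rmult_le_compat; try lra.
      + left; apply Rinv_0_lt_compat; lra.
      + apply Rinv_le_contravar; lra. }
  assert (hG : g0 <= Gd <= gU) by apply hg.
  replace (beta * E * B * Gd - gamma * phi 0 + gamma * phi 0) with (beta * E * B * Gd) by ring.
  assert (0 < beta * E) by (apply Rmult_lt_0_compat; lra).
  assert (0 < beta * E * B) by (apply Rmult_lt_0_compat; lra).
  split; [left; apply Rmult_lt_0_compat; lra |].
  apply Rmult_le_compat; [lra | lra | | lra].
  replace beta with (beta * 1) at 2 by ring.
  apply Rmult_le_compat; [lra | lra | apply Rmult_le_compat_l |]; lra.
Qed.

Lemma history_domain_open (r : R) (T : Rbar) s : -r < s -> Rbar_lt s T ->
  exists e, 0 < e /\ forall s', Rabs (s' - s) < e -> -r <= s' /\ Rbar_lt s' T.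
Proof.
  intros Hr HT; destruct T as [T | |]; simpl in HT; [| | contradiction].
  - exists (Rmin (s + r) (T - s)); split; [apply Rmin_pos; lra |].
    intros s' Hs; pose proof (Rmin_l (s + r) (T - s)); pose proof (Rmin_r (s + r) (T - s)).
    apply Rabs_def2 in Hs; simpl; lra.
  - exists (s + r); split; [lra |].
    intros s' Hs; apply Rabs_def2 in Hs; simpl; split; [lra | exact I].
Qed.

Lemma C1_on_history_continuity_pt (r : R) (T : Rbar) (x : R -> R) s :
  C1_on (fun t => -r <= t /\ Rbar_lt t T) x -> -r < s -> Rbar_lt s T ->
  continuity_pt x s.
Proof.
  intros [x' [Hd _]] Hr HT.
  destruct (history_domain_open r T s Hr HT) as [e [he HD]].
  apply derivable_continuous_pt; exists (x' s).
  apply (deriv_within_derivable_pt_lim _ x s (x' s) e he HD), Hd; split; [lra | exact HT].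
Qed.

Lemma seg_continuous (x : R -> R) t s : continuity_pt x (t + s) -> continuous (seg x t) s.
Proof.
  intros Hx; unfold seg; apply continuous_comp with (f := fun s => t + s).
  - apply (continuous_plus (fun _ => t) (fun s => s)); [apply continuous_const | apply continuous_id].
  - now apply continuity_pt_filterlim.
Qed.

Theorem proposition3p1
  (beta mu gamma a : R) (g v : R -> R) (g0 gU v0 vU r : R)
  (hbeta : 0 < beta) (hmu : 0 < mu) (hgamma : 0 < gamma) (ha : 0 < a)
  (hg_C1 : forall x, ex_derive g x /\ continuous (Derive g) x)
  (hg0 : 0 < g0) (hg : forall x, g0 <= g x <= gU)
  (hv_C1 : forall x, ex_derive v x /\ continuous (Derive v) x)
  (hv0 : 0 < v0) (hv : forall x, v0 <= v x <= vU)
  (hr : a / v0 < r) :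
  forall c : R, 0 < c -> exists c' : R, 0 < c' /\
    forall (phi : R -> R), in_XG beta mu gamma a r g v phi ->
      (forall t, -r <= t <= 0 -> Rabs (phi t) <= c) ->
      forall (x : R -> R) (T : Rbar),
        is_max_solution beta mu gamma a r g v phi x T ->
        forall t, -r <= t -> Rbar_lt t T -> Rabs (x t) <= c'.
Proof.
  intros c hc.
  set (K := beta * (vU / v0) * gU).
  exists (Rmax c (K / gamma)); split; [eapply Rlt_le_trans; [exact hc | apply Rmax_l] |].
  intros phi _ hphi x T [[_ [HC1 [Hinit Hode]]] _] t ht htT.
  destruct (Rle_lt_dec t 0) as [ht0 | ht0].
  { rewrite Hinit by (unfold Iseg; lra); eapply Rle_trans; [apply hphi; lra | apply Rmax_l]. }
  assert (hvc : forall z, continuous v z)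
    by (intros z; apply (@ex_derive_continuous R_AbsRing R_NormedModule), hv_C1).
  assert (hr0 : 0 < r) by (apply Rlt_trans with (a / v0); [apply Rdiv_lt_0_compat |]; lra).
  assert (Hdom : forall s, 0 <= s <= t -> -r <= s /\ Rbar_lt s T).
  { intros s Hs; split; [lra | apply Rbar_le_lt_trans with t; [simpl; lra | exact htT]]. }
  assert (Hx : forall s, -r < s -> s <= t -> continuity_pt x s).
  { intros s Hr Ht; apply (C1_on_history_continuity_pt r T); auto.
    apply Rbar_le_lt_trans with t; [simpl; lra | exact htT]. }
  eapply Rle_trans.
  - apply (Rabs_le_Rmax_of_feedback _ gamma t hgamma ltac:(lra) Hdom x
      (fun p => Gfun beta mu gamma a r g v (seg x p)) K).
    + intros s Hs; apply Hx; lra.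
    + intros p Hp; split; [apply Hode; [lra | apply Hdom; lra] |].
      replace (x p) with (seg x p 0) by (unfold seg; f_equal; ring).
      apply (Gfun_add_decay_bounds _ _ _ _ _ _ _ g0 gU v0 vU); auto; [lra |].
      intros s Hs; apply seg_continuous, Hx; lra.
  - rewrite (Hinit 0) by (unfold Iseg; lra).
    apply Rle_max_compat_r, hphi; lra.
Qed.
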